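(* For any non-negative integer $L$ and positive integers $p'$, $p$ such that $p' > p$, \[ D_{p',s}\left(\left\lceil\frac{L+r-s}{2}\right\rceil,\left\lfloor\frac{L-r+s}{2}\right\rfloor;p-r,r\right) = \sum_{j\in\mathbb{Z}}\left\{q^{j^2pp'+(rp'-sp)j}\begin{bmatrix}L\\ \left\lfloor\frac{L-r+s}{2}\right\rfloor-jp'\end{bmatrix}_{q}-q^{(jp+r)(jp'+s)}\begin{bmatrix}L\\ \left\lfloor\frac{L-r-s}{2}\right\rfloor-jp'\end{bmatrix}_{q}\right\}\ge 0, \] where $r$ and $s$ are integers such that $0 < r < p$ and $0 < s < p'$.
   Context: The $q$-binomial coefficient is $\begin{bmatrix}m\\ n\end{bmatrix}_q=\frac{(q;q)_m}{(q;q)_n(q;q)_{m-n}}$ for $m\ge n\ge 0$ and $0$ otherwise, where $(a;q)_L=\prod_{k=0}^{L-1}(1-aq^k)$. For integers $K,i$ and parameters $N,M,\alpha,\beta$, \[ D_{K,i}(N,M;\alpha,\beta)=\sum_{j\in\mathbb{Z}}\left\{q^{j((\alpha+\beta)Kj+K\beta-(\alpha+\beta)i)}\begin{bmatrix}M+N\\ M-Kj\end{bmatrix}_{q}-q^{((\alpha+\beta)j+\beta)(Kj+i)}\begin{bmatrix}M+N\\ M-Kj-i\end{bmatrix}_{q}\right\}. \] (Andrews et al. showed this is the generating function of partitions with at most $M$ parts, largest part at most $N$, and hook-difference restrictions on the $(1-\beta)$th and $(\alpha-1)$th diagonals, for $\alpha,\beta$ non-negative integers, $0<i<K$, $\beta-i\le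 N-M\le K-\alpha-i$.) ''$P(q)\ge 0$'' means the power series $P(q)$ has non-negative coefficients. *)

(* The q-series live in the field of fractions of Z[q]. *)
From HB Require Import structures.
From mathcomp Require Import all_boot all_order all_algebra fraction.
Set Implicit Arguments. Unset Strict Implicit. Unset Printing Implicit Defensive.
Import Order.TTheory GRing.Theory Num.Theory.
Local Open Scope ring_scope.

Definition qfrac := {fraction {poly int}}.
Definition q : qfrac := tofrac ('X : {poly int}).

Definition qpoch (L : nat) : qfrac := \prod_(k < L) (1 - q * q ^+ k).

Definition qbinom (m n : int) : qfrac :=
  if (0 <= n) && (n <= m) then
    qpoch `|m|%N / (qpoch `|n|%N * qpoch `|m - n|%N)
  else 0.

(* sum over j in Z of F j, restricted to -B <= j <= B;
   used only with B beyond the (finite) support of F *)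
Definition sumZ (B : nat) (F : int -> qfrac) : qfrac :=
  \sum_(k < (2 * B).+1) F (k%:Z - B%:Z).

(* D_{K,i}(N,M;alpha,beta); for K >= 1 all terms with |j| > |M|+|N|+|i|
   vanish because the q-binomials are then 0, so the truncation is exact *)
Definition D (K i N M alpha beta : int) : qfrac :=
  sumZ (`|M| + `|N| + `|i|).+1 (fun j =>
    q ^ (j * ((alpha + beta) * K * j + K * beta - (alpha + beta) * i))
      * qbinom (M + N) (M - K * j)
    - q ^ (((alpha + beta) * j + beta) * (K * j + i))
      * qbinom (M + N) (M - K * j - i)).

Definition floor2 (x : int) : int := (x %/ 2)%Z.
Definition ceil2 (x : int) : int := - ((- x) %/ 2)%Z.

(* "P(q) >= 0": P is a power series (here: polynomial) in q with
   non-negative coefficients *)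
Definition nonneg_series (f : qfrac) : Prop :=
  exists P : {poly int}, f = tofrac P /\ forall k : nat, 0 <= P`_k.

(* The sum D_{K,i}(N,M;a,b) satisfies two q-Pascal recurrences,
     D(N,M;a,b) = D(N,M-1;a,b) + q^M D(N-1,M;a+1,b-1),
     D(N,M;a,b) = D(N-1,M;a,b) + q^N D(N,M-1;a-1,b+1),
   which keep a + b fixed.  Inside the region b - i <= N - M <= K - a - i
   one of them always stays in the region, except on its two boundary lines
   b = 0, N - M = -i and a = 0, N - M = K - i, where D vanishes because the
   involution j -> -j (resp. j -> -j - 1) swaps its positive and negative
   terms.  Induction on N + M from D = [N = 0] at N + M = 0 then shows that
   D has non-negative coefficients.  The theorem is the instance
   K = p', i = s, (a, b) = (p - r, r), N + M = L. *)
From HB Require Import structures.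
From mathcomp Require Import all_boot all_order all_algebra fraction.
From mathcomp Require Import zify ring.
Set Implicit Arguments. Unset Strict Implicit. Unset Printing Implicit Defensive.
Import Order.TTheory GRing.Theory Num.Theory.
Local Open Scope ring_scope.

Lemma q_neq0 : q != 0.
Proof. by rewrite /q tofrac_eq0 polyX_eq0. Qed.

Lemma expr_q n : q ^+ n = tofrac ('X^n : {poly int}).
Proof. by rewrite /q tofracXn. Qed.

Lemma qexpzD (e1 e2 : int) : q ^ (e1 + e2) = q ^ e1 * q ^ e2.
Proof. by rewrite expfzDr // q_neq0. Qed.

Lemma one_sub_qexpS_neq0 k : 1 - q ^+ k.+1 != 0.
Proof.
rewrite expr_q -tofrac1 -tofracB tofrac_eq0.
apply/eqP => /(congr1 (fun P : {poly int} => P`_0)).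
by rewrite coefB coef1 coefXn coef0 subr0.
Qed.

Lemma qpoch0 : qpoch 0 = 1.
Proof. by rewrite /qpoch big_ord0. Qed.

Lemma qpochS n : qpoch n.+1 = qpoch n * (1 - q ^+ n.+1).
Proof. by rewrite /qpoch big_ord_recr /= exprS. Qed.

Lemma qpoch_neq0 n : qpoch n != 0.
Proof.
elim: n => [|n IH]; first by rewrite qpoch0 oner_eq0.
by rewrite qpochS mulf_neq0 ?one_sub_qexpS_neq0.
Qed.

Lemma qbinom_nat (n k : nat) :
  qbinom n k = if (k <= n)%N then qpoch n / (qpoch k * qpoch (n - k)) else 0.
Proof. by rewrite /qbinom lez_nat /=; case: leqP => // hk; rewrite subzn. Qed.

Lemma qbinom_eq0 (m k : int) : (k < 0) || (m < k) -> qbinom m k = 0.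
Proof. by rewrite /qbinom => /orP[] h; case: ifP => // /andP[]; lia. Qed.

Lemma qbinom0l (k : int) : qbinom 0 k = (k == 0)%:R.
Proof.
have [->|hk] := eqVneq k 0; first by rewrite /qbinom /= qpoch0 mulr1 divr1.
by rewrite qbinom_eq0 //; lia.
Qed.

Lemma qbinom_sym (m k : int) : qbinom m k = qbinom m (m - k).
Proof.
rewrite /qbinom (_ : m - (m - k) = k); last by ring.
have -> : (0 <= m - k) && (m - k <= m) = (0 <= k) && (k <= m).
  by apply/idP/idP => /andP[? ?]; apply/andP; split; lia.
by rewrite [qpoch `|k|%N * _]mulrC.
Qed.

(* [field] is run over an abstract field: on [qfrac] itself it does not terminate. *)
Lemma pascal_fraction (F : fieldType) (A B C x y : F) :
  A != 0 -> B != 0 -> C != 0 -> 1 - x != 0 -> 1 - y != 0 ->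
  C * (1 - x * y) / (A * (1 - x) * (B * (1 - y))) =
  C / (A * (B * (1 - y))) + x * (C / (A * (1 - x) * B)).
Proof. by move=> *; field; apply/and4P. Qed.

Lemma qbinom_pascal_nat (n k : nat) :
  qbinom n.+1 k.+1 = qbinom n k + q ^+ k.+1 * qbinom n k.+1.
Proof.
rewrite !qbinom_nat ltnS.
case: (ltngtP k n) => [hk|hk|<-]; last first.
- rewrite subSS subnn qpoch0 !mulr1 mulr0 addr0.
  by rewrite !divff ?qpoch_neq0.
- by rewrite mulr0 addr0.
have [b ->] : exists b, n = (k + b).+1 by exists (n - k.+1)%N; lia.
rewrite (_ : ((k + b).+2 - k.+1 = b.+1)%N); last lia.
rewrite (_ : ((k + b).+1 - k = b.+1)%N); last lia.
rewrite (_ : ((k + b).+1 - k.+1 = b)%N); last lia.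
rewrite (qpochS (k + b).+1) (qpochS k) (qpochS b).
rewrite (_ : q ^+ (k + b).+2 = q ^+ k.+1 * q ^+ b.+1); last by rewrite -exprD addnS.
by apply: pascal_fraction; rewrite ?qpoch_neq0 ?one_sub_qexpS_neq0.
Qed.

Lemma qbinom_pascal (m k : int) : 1 <= m ->
  qbinom m k = qbinom (m - 1) (k - 1) + q ^ k * qbinom (m - 1) k.
Proof.
case: m => [[|n]|n] // _; rewrite (_ : n.+1%:Z - 1 = n); last lia.
case: k => [[|k]|k].
- rewrite expr0z mul1r [qbinom n (0 - 1)]qbinom_eq0 ?add0r; last lia.
  by rewrite !qbinom_nat /= !subn0 qpoch0 !mul1r !divff ?qpoch_neq0.
- by rewrite (_ : k.+1%:Z - 1 = k); [exact: qbinom_pascal_nat | lia].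
- by rewrite !qbinom_eq0 ?mulr0 ?addr0 //; lia.
Qed.

Lemma qbinom_pascal_sym (m k : int) : 1 <= m ->
  qbinom m k = qbinom (m - 1) k + q ^ (m - k) * qbinom (m - 1) (k - 1).
Proof.
move=> hm; rewrite qbinom_sym qbinom_pascal //.
rewrite [qbinom _ (k - 1)]qbinom_sym [qbinom _ k]qbinom_sym.
by congr (qbinom _ _ + q ^ _ * qbinom _ _); lia.
Qed.

Section SumZ.

Implicit Types (B : nat) (F G : int -> qfrac).

Lemma eq_sumZ B F G : (forall j, F j = G j) -> sumZ B F = sumZ B G.
Proof. by move=> eqFG; apply: eq_bigr => k _. Qed.

Lemma sumZ0 F : sumZ 0 F = F 0.
Proof. by rewrite /sumZ big_ord1 subr0. Qed.

Lemma sumZD B F G : sumZ B (fun j => F j + G j) = sumZ B F + sumZ B G.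
Proof. exact: big_split. Qed.

Lemma sumZB B F G : sumZ B (fun j => F j - G j) = sumZ B F - sumZ B G.
Proof. exact: sumrB. Qed.

Lemma sumZ_mull B c F : sumZ B (fun j => c * F j) = c * sumZ B F.
Proof. by rewrite /sumZ mulr_sumr. Qed.

Lemma sumZS B F : F B.+1%:Z = 0 -> F (- B.+1%:Z) = 0 -> sumZ B.+1 F = sumZ B F.
Proof.
move=> FB FNB; rewrite /sumZ (_ : (2 * B.+1).+1 = (2 * B).+3)%N; last lia.
rewrite big_ord_recl big_ord_recr /= (_ : 0%:Z - B.+1%:Z = - B.+1%:Z); last lia.
rewrite FNB add0r (_ : (bump 0 (2 * B).+1)%:Z - B.+1%:Z = B.+1%:Z); last by rewrite /bump; lia.
by rewrite FB addr0; apply: eq_bigr => k _; congr F; rewrite /bump; lia.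
Qed.

Lemma sumZ_support B0 B1 B2 F : (forall j, (B0 < `|j|)%N -> F j = 0) ->
  (B0 <= B1)%N -> (B0 <= B2)%N -> sumZ B1 F = sumZ B2 F.
Proof.
have widen k : (forall j, (B0 < `|j|)%N -> F j = 0) -> sumZ (B0 + k) F = sumZ B0 F.
  by move=> F0; elim: k => [|k IH]; rewrite ?addn0 // addnS sumZS ?IH ?F0 //; lia.
by move=> F0 h1 h2; rewrite -(subnKC h1) -(subnKC h2) !widen.
Qed.

Lemma sumZ_opp B F : sumZ B (fun j => F (- j)) = sumZ B F.
Proof.
rewrite /sumZ (reindex_inj rev_ord_inj); apply: eq_bigr => k _ /=; congr F.
have := ltn_ord k; lia.
Qed.

Lemma sumZ_shift B F : F B%:Z = 0 -> F (- B%:Z - 1) = 0 ->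
  sumZ B (fun j => F (j - 1)) = sumZ B F.
Proof.
move=> FB FNB; rewrite /sumZ big_ord_recl big_ord_recr /=.
rewrite (_ : 0%:Z - B%:Z - 1 = - B%:Z - 1); last lia.
rewrite FNB add0r (_ : (2 * B)%:Z - B%:Z = B%:Z); last lia.
by rewrite FB addr0; apply: eq_bigr => k _; congr F; rewrite /bump; lia.
Qed.

End SumZ.

Lemma nonneg_series0 : nonneg_series 0.
Proof. by exists 0; rewrite tofrac0; split=> // k; rewrite coef0. Qed.

Lemma nonneg_series1 : nonneg_series 1.
Proof. by exists 1; rewrite tofrac1; split=> // k; rewrite coef1; case: (k == 0%N). Qed.

Lemma nonneg_seriesD f g :
  nonneg_series f -> nonneg_series g -> nonneg_series (f + g).
Proof.
move=> [P [-> P0]] [Q [-> Q0]]; exists (P + Q); rewrite tofracD.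
by split=> // k; rewrite coefD addr_ge0.
Qed.

Lemma nonneg_series_qexp (e : int) f :
  0 <= e -> nonneg_series f -> nonneg_series (q ^ e * f).
Proof.
case: e => // n _ [P [-> P0]]; exists ('X^n * P); rewrite tofracM -expr_q.
by split=> // k; rewrite coefXnM; case: ifP.
Qed.

Lemma qexp_regroup (m e1 e2 d1 d2 : int) (X1 X2 Y1 Y2 : qfrac) :
  q ^ e1 * (X1 + q ^ d1 * Y1) - q ^ e2 * (X2 + q ^ d2 * Y2)
  = (q ^ e1 * X1 - q ^ e2 * X2)
    + q ^ m * (q ^ (e1 + d1 - m) * Y1 - q ^ (e2 + d2 - m) * Y2).
Proof.
by rewrite !mulrDr !mulrN !mulrA -!qexpzD !(addrC m) !subrK opprD addrACA.
Qed.

Section DRecurrences.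

Variables (K i : int).
Hypothesis i_ge0 : 0 <= i.

Definition Dterm (N M a b j : int) : qfrac :=
  q ^ (j * ((a + b) * K * j + K * b - (a + b) * i)) * qbinom (M + N) (M - K * j)
  - q ^ (((a + b) * j + b) * (K * j + i)) * qbinom (M + N) (M - K * j - i).

Lemma Dterm_eq0 N M a b j : (M < K * j) || (N + K * j + i < 0) -> Dterm N M a b j = 0.
Proof. by move=> hj; rewrite /Dterm !qbinom_eq0 ?mulr0 ?subr0 //; lia. Qed.

Hypothesis K_ge1 : 1 <= K.

Lemma Dterm_supp N M a b j :
  (`|M| + `|N| + `|i| < `|j|)%N -> Dterm N M a b j = 0.
Proof.
move=> hj; apply: Dterm_eq0.
have [j_ge0|j_lt0] := lerP 0 j; apply/orP; [left; nia | right; nia].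
Qed.

Lemma D_sumZ N M a b B : (`|M| + `|N| + `|i| <= B)%N ->
  D K i N M a b = sumZ B (Dterm N M a b).
Proof. by move=> hB; apply: sumZ_support (@Dterm_supp _ _ _ _) _ hB; lia. Qed.

Lemma Dterm_rec1 N M a b j : 1 <= M + N ->
  Dterm N M a b j = Dterm N (M - 1) a b j + q ^ M * Dterm (N - 1) M (a + 1) (b - 1) j.
Proof.
move=> hMN; rewrite /Dterm !(@qbinom_pascal (M + N)) // (qexp_regroup M).
by congr (q ^ _ * qbinom _ _ - q ^ _ * qbinom _ _
          + q ^ M * (q ^ _ * qbinom _ _ - q ^ _ * qbinom _ _)); ring.
Qed.

Lemma Dterm_rec2 N M a b j : 1 <= M + N ->
  Dterm N M a b j = Dterm (N - 1) M a b j + q ^ N * Dterm N (M - 1) (a - 1) (b + 1) j.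
Proof.
move=> hMN; rewrite /Dterm !(@qbinom_pascal_sym (M + N)) // (qexp_regroup N).
by congr (q ^ _ * qbinom _ _ - q ^ _ * qbinom _ _
          + q ^ N * (q ^ _ * qbinom _ _ - q ^ _ * qbinom _ _)); ring.
Qed.

Lemma D_rec1 N M a b : 1 <= M + N ->
  D K i N M a b = D K i N (M - 1) a b + q ^ M * D K i (N - 1) M (a + 1) (b - 1).
Proof.
move=> hMN; set B := (`|M| + `|N| + `|i|).+1.
rewrite !(@D_sumZ _ _ _ _ B); try lia.
by rewrite -sumZ_mull -sumZD; apply: eq_sumZ => j; apply: Dterm_rec1.
Qed.

Lemma D_rec2 N M a b : 1 <= M + N ->
  D K i N M a b = D K i (N - 1) M a b + q ^ N * D K i N (M - 1) (a - 1) (b + 1).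
Proof.
move=> hMN; set B := (`|M| + `|N| + `|i|).+1.
rewrite !(@D_sumZ _ _ _ _ B); try lia.
by rewrite -sumZ_mull -sumZD; apply: eq_sumZ => j; apply: Dterm_rec2.
Qed.

(* The negative terms are the positive ones reindexed by j -> -j. *)
Lemma D_eq0_lower M a : D K i (M - i) M a 0 = 0.
Proof.
apply/eqP; rewrite /D sumZB subr_eq0 -sumZ_opp; apply/eqP/eq_sumZ => j.
by rewrite qbinom_sym; congr (q ^ _ * qbinom _ _); ring.
Qed.

(* The negative terms are the positive ones reindexed by j -> -j - 1. *)
Lemma D_eq0_upper M b : D K i (M + K - i) M 0 b = 0.
Proof.
set N := M + K - i; set B := (`|M| + `|N| + `|i|).+1.
pose T j := q ^ (((0 + b) * j + b) * (K * j + i)) * qbinom (M + N) (M - K * j - i).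
have TB : T B%:Z = 0 by rewrite /T qbinom_eq0 ?mulr0 //; nia.
have TNB : T (- B%:Z - 1) = 0 by rewrite /T qbinom_eq0 ?mulr0 //; nia.
apply/eqP; rewrite /D sumZB -/B subr_eq0 -(sumZ_shift TB TNB) -sumZ_opp.
apply/eqP/eq_sumZ => j.
by rewrite /T qbinom_sym; congr (q ^ _ * qbinom _ _); rewrite /N; ring.
Qed.

Lemma D_base N M a b : 0 < i < K -> 0 <= a -> 0 <= b ->
  b - i <= N - M <= K - a - i -> N + M = 0 -> D K i N M a b = (N == 0)%:R.
Proof.
move=> /andP[i_gt0 i_ltK] a_ge0 b_ge0 /andP[lo hi] NM0.
have Dterm_base j : Dterm N M a b j = ((j == 0) && (N == 0))%:R.
  rewrite /Dterm (_ : M + N = 0) ?qbinom0l; last lia.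
  have -> : (M - K * j - i == 0) = false.
    by apply/negbTE/eqP; have [j_ge0|j_lt0] := lerP 0 j; nia.
  have -> : (M - K * j == 0) = (j == 0) && (N == 0).
    apply/eqP/andP => [MKj|[/eqP -> /eqP N0]]; last by rewrite mulr0; lia.
    have j0 : j = 0 by case: (ltgtP j 0) => // j0; exfalso; nia.
    by rewrite j0 mulr0 in MKj; split; apply/eqP; lia.
  by case: eqP => [->|_] /=; rewrite ?mul0r ?expr0z ?mul1r !mulr0 subr0.
rewrite /D (eq_sumZ _ Dterm_base) (@sumZ_support 0 _ 0) ?sumZ0 //.
by move=> j j_neq0; case: eqP => // j0; rewrite j0 in j_neq0.
Qed.

(* The vanishing clause is part of the induction: it disposes of the terms
   q^M D(..) and q^N D(..) of the recurrences whose exponent is negative. *)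
Lemma D_nonneg_vanish (n : nat) (N M a b : int) : 0 < i < K -> N + M = n ->
  [&& 0 <= a, 0 <= b, 0 < a + b < K & b - i <= N - M <= K - a - i] ->
  nonneg_series (D K i N M a b) /\ (N < 0 \/ M < 0 -> D K i N M a b = 0).
Proof.
move=> iK; elim: n N M a b => [|n IH] N M a b NMn region.
  rewrite D_base //; try lia.
  split; first by case: (N == 0); [exact: nonneg_series1 | exact: nonneg_series0].
  by case: eqP => // N0 neg; exfalso; lia.
have MN_ge1 : 1 <= M + N by lia.
have [rec1|not_rec1] := boolP ((0 < b) && (N - M < K - a - i)).
  have [P1 Z1] := IH N (M - 1) a b ltac:(lia) ltac:(lia).
  have [P2 Z2] := IH (N - 1) M (a + 1) (b - 1) ltac:(lia) ltac:(lia).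
  rewrite D_rec1 //; split.
    have [M_ge0|M_lt0] := lerP 0 M.
      exact: nonneg_seriesD P1 (nonneg_series_qexp M_ge0 P2).
    by rewrite Z2 ?mulr0 ?addr0 //; right.
  by move=> neg; rewrite Z1 ?Z2 ?mulr0 ?addr0 //; lia.
have [rec2|not_rec2] := boolP ((0 < a) && (b - i < N - M)).
  have [P1 Z1] := IH (N - 1) M a b ltac:(lia) ltac:(lia).
  have [P2 Z2] := IH N (M - 1) (a - 1) (b + 1) ltac:(lia) ltac:(lia).
  rewrite D_rec2 //; split.
    have [N_ge0|N_lt0] := lerP 0 N.
      exact: nonneg_seriesD P1 (nonneg_series_qexp N_ge0 P2).
    by rewrite Z2 ?mulr0 ?addr0 //; left.
  by move=> neg; rewrite Z1 ?Z2 ?mulr0 ?addr0 //; lia.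
suff -> : D K i N M a b = 0 by split=> [|//]; exact: nonneg_series0.
have [b0|b_neq0] := eqVneq b 0.
  have N_eq : N = M - i by lia.
  by rewrite b0 N_eq D_eq0_lower.
have a0 : a = 0 by lia.
have N_eq : N = M + K - i by lia.
by rewrite a0 N_eq D_eq0_upper.
Qed.

End DRecurrences.

Lemma floor2_bounds (x : int) : 2 * floor2 x <= x <= 2 * floor2 x + 1.
Proof.
rewrite /floor2; have := divz_eq x 2; have := @modz_ge0 x 2 isT.
by have := @ltz_pmod x 2 isT; lia.
Qed.

Lemma ceil2_bounds (x : int) : 2 * ceil2 x - 1 <= x <= 2 * ceil2 x.
Proof. by have := floor2_bounds (- x); rewrite /ceil2 /floor2; lia. Qed.

Theorem theorem2p2 (L p' p r s : nat) :
  (0 < p)%N -> (p < p')%N ->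
  (0 < r)%N -> (r < p)%N -> (0 < s)%N -> (s < p')%N ->
  let Lz := L%:Z in let pz := p%:Z in let p'z := p'%:Z in
  let rz := r%:Z in let sz := s%:Z in
  D p'z sz (ceil2 (Lz + rz - sz)) (floor2 (Lz - rz + sz)) (pz - rz) rz
  = sumZ (L + s).+1 (fun j =>
      q ^ (j ^+ 2 * pz * p'z + (rz * p'z - sz * pz) * j)
        * qbinom Lz (floor2 (Lz - rz + sz) - j * p'z)
      - q ^ ((j * pz + rz) * (j * p'z + sz))
        * qbinom Lz (floor2 (Lz - rz - sz) - j * p'z))
  /\ nonneg_series (D p'z sz (ceil2 (Lz + rz - sz)) (floor2 (Lz - rz + sz)) (pz - rz) rz).
Proof.
move=> p_gt0 p_lt_p' r_gt0 r_lt_p s_gt0 s_lt_p' Lz pz p'z rz sz.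
have := ceil2_bounds (Lz + rz - sz); have := floor2_bounds (Lz - rz + sz).
have := floor2_bounds (Lz - rz - sz); rewrite /Lz /pz /p'z /rz /sz.
set N := ceil2 _; set M := floor2 (L%:Z - r%:Z + s%:Z); set M' := floor2 _.
move=> M'_bd M_bd N_bd.
have NM : N + M = L by lia.
split; last by apply: (proj1 (@D_nonneg_vanish p' s _ _ L N M _ _ _ _ _)); lia.
have supp j : (L + s < `|j|)%N -> Dterm p' s N M (p%:Z - r%:Z) r j = 0.
  move=> j_big; apply: Dterm_eq0 => //.
  by have [j_ge0|j_lt0] := lerP 0 j; apply/orP; [left | right]; nia.
rewrite /D (@sumZ_support _ _ (L + s).+1 _ supp); try lia; apply: eq_sumZ => j.
rewrite /Dterm [M + N]addrC NM (_ : M' = M - s%:Z); last lia.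
by congr (q ^ _ * qbinom _ _ - q ^ _ * qbinom _ _); ring.
Qed.
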